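(* Let $A$ be an alternative algebra over a field $F$ with unit element $1$, and let $d$ be a derivation with invertible values of $A$. If $x\in A$ satisfies $d(x)=0$, then either $x=0$ or $x$ is invertible.
   Context: An algebra $A$ is alternative if $(x,x,y)=0$ and $(x,y,y)=0$ for all $x,y\in A$, where $(x,y,z)=(xy)z-x(yz)$ is the associator. An element $a$ of a unital alternative algebra is invertible if there is $b$ with $ab=ba=1$; $U$ denotes the set of invertible elements of $A$. A derivation with invertible values of $A$ is a nonzero derivation $d$ of $A$ such that for every $x\in A$ either $d(x)\in U$ or $d(x)=0$. *)

(* Non-associative (alternative) algebras are not in MathComp,
   so we describe them explicitly: a vector space V over a field F (an lmodType F)
   equipped with a bilinear multiplication and a two-sided unit element. *)
From HB Require Import structures.
From mathcomp Require Import all_boot all_order all_algebra.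
Set Implicit Arguments. Unset Strict Implicit. Unset Printing Implicit Defensive.
Import GRing.Theory.
Local Open Scope ring_scope.

Definition bilinear_mul (F : fieldType) (V : lmodType F) (mul : V -> V -> V) : Prop :=
  (forall (a : F) (x y z : V), mul (a *: x + y) z = a *: mul x z + mul y z) /\
  (forall (a : F) (x y z : V), mul x (a *: y + z) = a *: mul x y + mul x z).

Definition associator (F : fieldType) (V : lmodType F) (mul : V -> V -> V) (x y z : V) : V :=
  mul (mul x y) z - mul x (mul y z).

Definition unital_alternative_algebra (F : fieldType) (V : lmodType F)
    (mul : V -> V -> V) (one : V) : Prop :=
  [/\ bilinear_mul mul,
      (forall x : V, mul one x = x /\ mul x one = x),
      (forall x y : V, associator mul x x y = 0) &
      (forall x y : V, associator mul x y y = 0)].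

Definition invertible (F : fieldType) (V : lmodType F) (mul : V -> V -> V) (one : V) (a : V) : Prop :=
  exists b : V, mul a b = one /\ mul b a = one.

Definition derivation (F : fieldType) (V : lmodType F) (mul : V -> V -> V) (d : V -> V) : Prop :=
  (forall (a : F) (x y : V), d (a *: x + y) = a *: d x + d y) /\
  (forall x y : V, d (mul x y) = mul (d x) y + mul x (d y)).

Definition derivation_with_invertible_values (F : fieldType) (V : lmodType F)
    (mul : V -> V -> V) (one : V) (d : V -> V) : Prop :=
  [/\ derivation mul d,
      (exists x : V, d x <> 0) &
      (forall x : V, invertible mul one (d x) \/ d x = 0)].

From HB Require Import structures.
From mathcomp Require Import all_boot all_order all_algebra.
Import GRing.Theory.
Local Open Scope ring_scope.

(* Let d be a derivation with invertible values of a unital alternative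
   algebra A and let d x = 0.  Pick y with d y invertible.  Since d x = 0,
   the Leibniz rule gives d (x y) = x d(y) and d ((x y) x) = (x d(y)) x, so
   each of these elements is either 0 or invertible.
   - If x d(y) = 0, then x = 0, because right multiplication by the
     invertible d(y) has trivial kernel.
   - If (x d(y)) x = 0, then x = 0, because left multiplication by the
     invertible x d(y) has trivial kernel.
   - Otherwise (x b) x is invertible for b = d(y), and then x itself is
     invertible: by the left Moufang identity x (b (x z)) = ((x b) x) z. *)

Section AlternativeAlgebra.
Context {F : fieldType} {V : lmodType F} {mul : V -> V -> V} {one : V}.
Hypothesis hA : unital_alternative_algebra mul one.
Local Notation as3 := (associator mul).

Lemma mulDl x y z : mul (x + y) z = mul x z + mul y z.
Proof. by case: hA => [[hl _] _ _ _]; rewrite -[x in LHS]scale1r hl scale1r. Qed.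

Lemma mulDr x y z : mul z (x + y) = mul z x + mul z y.
Proof. by case: hA => [[_ hr] _ _ _]; rewrite -[x in LHS]scale1r hr scale1r. Qed.

Lemma mul0l z : mul 0 z = 0.
Proof. by apply: (addrI (mul 0 z)); rewrite -mulDl !addr0. Qed.

Lemma mul0r z : mul z 0 = 0.
Proof. by apply: (addrI (mul z 0)); rewrite -mulDr !addr0. Qed.

Lemma mulBl x y z : mul (x - y) z = mul x z - mul y z.
Proof. by apply: (addrI (mul y z)); rewrite -mulDl !subrKC. Qed.

Lemma mulBr x y z : mul z (x - y) = mul z x - mul z y.
Proof. by apply: (addrI (mul z y)); rewrite -mulDr !subrKC. Qed.

Lemma mul1l z : mul one z = z. Proof. by case: hA => _ /(_ z) []. Qed.
Lemma mul1r z : mul z one = z. Proof. by case: hA => _ /(_ z) []. Qed.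

Lemma associatorDl a b c d : as3 (a + b) c d = as3 a c d + as3 b c d.
Proof. by rewrite /associator !(mulDl, mulDr) opprD addrACA. Qed.
Lemma associatorDm a b c d : as3 a (b + c) d = as3 a b d + as3 a c d.
Proof. by rewrite /associator !(mulDl, mulDr) opprD addrACA. Qed.
Lemma associatorDr a b c d : as3 a b (c + d) = as3 a b c + as3 a b d.
Proof. by rewrite /associator !(mulDl, mulDr) opprD addrACA. Qed.

Lemma associator_xxy a c : as3 a a c = 0. Proof. by case: hA. Qed.
Lemma associator_xyy a c : as3 a c c = 0. Proof. by case: hA. Qed.

(* Linearising the defining identities: the associator is alternating. *)
Lemma associator_swap12 a b c : as3 a b c = - as3 b a c.
Proof.
apply/eqP; rewrite -addr_eq0; apply/eqP.
have := associator_xxy (a + b) c.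
by rewrite associatorDl !associatorDm !associator_xxy add0r addr0.
Qed.

Lemma associator_swap23 a b c : as3 a b c = - as3 a c b.
Proof.
apply/eqP; rewrite -addr_eq0; apply/eqP.
have := associator_xyy a (b + c).
by rewrite associatorDm !associatorDr !associator_xyy add0r addr0.
Qed.

Lemma associator_flexible a b : as3 a b a = 0.
Proof. by rewrite associator_swap23 associator_xxy oppr0. Qed.

Lemma associator_cyclic a b c : as3 a b c = as3 b c a.
Proof. by rewrite associator_swap12 associator_swap23 opprK. Qed.

(* Teichmueller identity; its proof uses only bilinearity of the product. *)
Lemma teichmuller a b c d :
  as3 (mul a b) c d - as3 a (mul b c) d + as3 a b (mul c d)
  = mul a (as3 b c d) + mul (as3 a b c) d.
Proof.
rewrite /associator mulBr mulBl.
by rewrite addrAC subrKA opprB addrACA [RHS]addrACA (addrC (mul _ d)).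
Qed.

(* Left Moufang identity.  Its defect is (x b, x, y) + (x, b, x y); three
   instances of the Teichmueller identity show that this sum vanishes. *)
Lemma left_moufang x b y : mul x (mul b (mul x y)) = mul (mul (mul x b) x) y.
Proof.
have expand : mul (mul (mul x b) x) y - mul x (mul b (mul x y))
              = as3 (mul x b) x y + as3 x b (mul x y).
  by rewrite /associator addrA subrK.
have t1 := teichmuller x b x y.
rewrite associator_flexible mul0l addr0 in t1.
have t2 := teichmuller b x x y.
rewrite associator_xxy associator_xyy mul0l mul0r addr0 associator_swap12 in t2.
have t3 := teichmuller x x y b.
rewrite !associator_xxy mul0l !addr0 -(associator_cyclic b (mul x x) y)
  -(associator_cyclic b x (mul x y)) -(associator_cyclic b x y) in t3.
have mid : - as3 x (mul b x) y = mul x (as3 b x y).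
  by rewrite -t3; apply/eqP; rewrite -subr_eq0 (opprB (as3 b _ y)) addrA addrAC t2.
have sum0 : as3 (mul x b) x y + as3 x b (mul x y) = 0.
  by rewrite -(subrK (as3 x (mul b x) y) (_ + _)) (addrAC (as3 _ x y)) t1 -mid addNr.
by apply/eqP; rewrite eq_sym -subr_eq0 expand sum0.
Qed.

(* Left multiplication by an invertible u has trivial kernel: with v its
   inverse, u (v v) = v and Moufang give u ((v v) (u z)) = (v u) z = z. *)
Lemma invertible_mul_eq0l u z : invertible mul one u -> mul u z = 0 -> z = 0.
Proof.
case=> v [uv vu] uz0.
have uvv : mul u (mul v v) = v.
  apply/eqP; rewrite eq_sym -subr_eq0 -[v in v - _]mul1l -uv.
  by rewrite -/(associator mul u v v) associator_xyy.
have <- : mul u (mul (mul v v) (mul u z)) = z by rewrite left_moufang uvv vu mul1l.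
by rewrite uz0 !mul0r.
Qed.

(* If (x b) x is invertible with inverse q', then w := b (x q') is an inverse
   of x: x w = ((x b) x) q' = 1 by Moufang, and flexibility (x w) x = x (w x)
   yields x (w x - 1) = 0, where left multiplication by x is injective since
   x (b (x z)) = ((x b) x) z. *)
Lemma invertible_of_invertible_sandwich x b :
  invertible mul one (mul (mul x b) x) -> invertible mul one x.
Proof.
move=> q_inv; have [q' [qq' _]] := q_inv.
have x_cancel z : mul x z = 0 -> z = 0.
  by move=> xz0; apply: (invertible_mul_eq0l _ _ q_inv); rewrite -left_moufang xz0 !mul0r.
exists (mul b (mul x q')); split; first by rewrite left_moufang.
have := associator_flexible x (mul b (mul x q')).
rewrite /associator left_moufang qq' mul1l => /eqP; rewrite subr_eq0 => /eqP x_eq.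
apply/eqP; rewrite -subr_eq0; apply/eqP; apply: x_cancel.
by rewrite mulBr mul1r -x_eq subrr.
Qed.

Lemma derivation_mul_constl {d c} :
  derivation mul d -> d c = 0 -> forall z, d (mul c z) = mul c (d z).
Proof. by case=> _ leibniz dc0 z; rewrite leibniz dc0 mul0l add0r. Qed.

Lemma derivation_mul_constr {d c} :
  derivation mul d -> d c = 0 -> forall z, d (mul z c) = mul (d z) c.
Proof. by case=> _ leibniz dc0 z; rewrite leibniz dc0 mul0r addr0. Qed.

End AlternativeAlgebra.

(* The opposite algebra of an alternative algebra is alternative; this
   transports left-sided statements to right-sided ones. *)
Section OppositeAlgebra.
Context {F : fieldType} {V : lmodType F} {mul : V -> V -> V} {one : V}.
Hypothesis hA : unital_alternative_algebra mul one.

Lemma opposite_alternative : unital_alternative_algebra (fun a b => mul b a) one.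
Proof.
have [[hl hr] hu _ _] := hA; split.
- by split=> a x y z; [apply: hr | apply: hl].
- by move=> x; case: (hu x).
- by move=> x y; rewrite /associator -opprB -/(associator mul y x x) (associator_xyy hA) oppr0.
- by move=> x y; rewrite /associator -opprB -/(associator mul y y x) (associator_xxy hA) oppr0.
Qed.

Lemma invertible_mul_eq0r u z :
  invertible mul one u -> mul z u = 0 -> z = 0.
Proof.
move=> [v [uv vu]] zu0.
by apply: (invertible_mul_eq0l opposite_alternative u z _ zu0); exists v.
Qed.

End OppositeAlgebra.

Theorem lemma1p2 (F : fieldType) (V : lmodType F) (mul : V -> V -> V) (one : V)
    (d : V -> V)
    (hA : unital_alternative_algebra mul one)
    (hd : derivation_with_invertible_values mul one d)
    (x : V) (hx : d x = 0) :
  x = 0 \/ invertible mul one x.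
Proof.
have [der [y dy_neq0] values] := hd.
have dy_inv : invertible mul one (d y) by case: (values y).
have dxy : d (mul x y) = mul x (d y) := derivation_mul_constl hA der hx y.
have dxyx : d (mul (mul x y) x) = mul (mul x (d y)) x.
  by rewrite (derivation_mul_constr hA der hx) dxy.
have := values (mul x y); rewrite dxy => -[xdy_inv | xdy0]; last first.
  by left; apply: (invertible_mul_eq0r hA _ _ dy_inv xdy0).
have := values (mul (mul x y) x); rewrite dxyx => -[xdyx_inv | xdyx0].
  by right; apply: (invertible_of_invertible_sandwich hA _ _ xdyx_inv).
by left; apply: (invertible_mul_eq0l hA _ _ xdy_inv xdyx0).
Qed.
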